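(* Acyclic morphisms between cylinder categories satisfy the 2-out-of-6 property: if $F,G,H$ are composable morphisms of cylinder categories such that $F\circ G$ and $G\circ H$ are acyclic, then $F$, $G$, $H$ and $F\circ G\circ H$ are acyclic.
   Context: A cylinder category is a category $\mathcal C$ with two classes of morphisms, the cofibrations and the weak equivalences (morphisms in both classes are called trivial cofibrations), such that: (1) both classes contain all isomorphisms and are closed under composition; (2) weak equivalences satisfy 2-out-of-6: if $f,g,h$ are composable and $f\circ g$, $g\circ h$ are weak equivalences then $f,g,h,f\circ g\circ h$ are; (3) $\mathcal C$ has an initial object $0$ and every $0\to X$ is a cofibration; (4) pushouts of cofibrations along arbitrary maps exist and are cofibrations; (5) pushouts of trivial cofibrations are trivial cofibrations; (6) for every object $X$ the codiagonal $X\sqcup X\to X$ factors as a cofibration $X\sqcup X\hookrightarrow IX$ followed by a weak equivalence $IX\to X$; (7) every trivial cofibration admits a retraction. A morphism of cylinder categories is a functor preserving cofibrations, weak equivalences, the initial object and pushouts along cofibrations. For a cofibration $A\hookrightarrow B$, a relative cylinder object is a factorization $B\sqcup_A B\hookrightarrow I_AB\xrightarrow{\sim}B$ of the codiagonal into a cofibration followed by a weak equivalence. Two maps $f,g:B\to X$ with $f|_A=g|_A$ are homotopic relative to $A$, written $f\sim_A g$, if $(f,g):B\sqcup_AB\to X$ extends to $I_AB\to X$ for some relative cylinder object. A morphism $F:\mathcal C\to\mathcal D$ is homotopy surjective if for every object $D$ of $\mathcal D$ there is an object $C$ of $\mathcal C$ and a weak equivalence $D\to F(C)$. $F$ is homotopy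 fully faithful if for every cofibration $i:A\hookrightarrow B$ in $\mathcal C$, every arrow $x:A\to X$ in $\mathcal C$, and every $v:F(B)\to F(X)$ in $\mathcal D$ with $v\circ F(i)=F(x)$, there is $v':B\to X$ in $\mathcal C$ with $v'\circ i=x$ and $F(v')\sim_{F(A)} v$. $F$ is acyclic if it is both homotopy surjective and homotopy fully faithful. *)

From Stdlib Require Import Setoid.

Set Implicit Arguments.
Set Universe Polymorphism.

Record Category := {
  ob :> Type;
  hom : ob -> ob -> Type;
  idm : forall X, hom X X;
  comp : forall X Y Z, hom Y Z -> hom X Y -> hom X Z;
  comp_assoc : forall W X Y Z (h : hom Y Z) (g : hom X Y) (f : hom W X),
      comp h (comp g f) = comp (comp h g) f;
  comp_id_l : forall X Y (f : hom X Y), comp (idm Y) f = f;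
  comp_id_r : forall X Y (f : hom X Y), comp f (idm X) = f
}.

Arguments hom {c} _ _.
Arguments idm {c} _.
Arguments comp {c X Y Z} _ _.

Notation "g ∘ f" := (comp g f) (at level 40, left associativity).

Section CatDefs.
Context {C : Category}.

Definition is_iso {X Y : C} (f : hom X Y) : Prop :=
  exists g : hom Y X, g ∘ f = idm X /\ f ∘ g = idm Y.

Definition is_initial (Z : C) : Prop :=
  forall X : C, exists f : hom Z X, forall g : hom Z X, g = f.

Definition is_pushout {A B C' P : C} (f : hom A B) (g : hom A C')
           (j : hom B P) (k : hom C' P) : Prop :=
  j ∘ f = k ∘ g /\
  forall (Q : C) (u : hom B Q) (v : hom C' Q), u ∘ f = v ∘ g ->
    exists w : hom P Q, (w ∘ j = u /\ w ∘ k = v) /\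
      forall w' : hom P Q, w' ∘ j = u -> w' ∘ k = v -> w' = w.
End CatDefs.

Record CylinderCategory := {
  cat :> Category;
  cof : forall X Y : cat, hom X Y -> Prop;
  we  : forall X Y : cat, hom X Y -> Prop;
  iso_cof : forall (X Y : cat) (f : hom X Y), is_iso f -> cof _ _ f;
  iso_we  : forall (X Y : cat) (f : hom X Y), is_iso f -> we _ _ f;
  cof_comp : forall (X Y Z : cat) (g : hom Y Z) (f : hom X Y),
      cof _ _ f -> cof _ _ g -> cof _ _ (g ∘ f);
  we_comp : forall (X Y Z : cat) (g : hom Y Z) (f : hom X Y),
      we _ _ f -> we _ _ g -> we _ _ (g ∘ f);
  we_2of6 : forall (W X Y Z : cat) (h : hom W X) (g : hom X Y) (f : hom Y Z),
      we _ _ (f ∘ g) -> we _ _ (g ∘ h) ->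
      we _ _ f /\ we _ _ g /\ we _ _ h /\ we _ _ (f ∘ g ∘ h);
  zero : cat;
  zero_initial : is_initial zero;
  zero_cof : forall (X : cat) (f : hom zero X), cof _ _ f;
  pushout_exists : forall (A B C' : cat) (f : hom A B) (g : hom A C'),
      cof _ _ f -> exists (P : cat) (j : hom B P) (k : hom C' P), is_pushout f g j k;
  pushout_cof : forall (A B C' P : cat) (f : hom A B) (g : hom A C')
      (j : hom B P) (k : hom C' P), is_pushout f g j k -> cof _ _ f -> cof _ _ k;
  pushout_we : forall (A B C' P : cat) (f : hom A B) (g : hom A C')
      (j : hom B P) (k : hom C' P), is_pushout f g j k -> cof _ _ f -> we _ _ f -> we _ _ k;
  (* (6) cylinder objects: for any coproduct X ⊔ X (= pushout over 0) the
     codiagonal factors as a cofibration followed by a weak equivalence *)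
  cylinder : forall (X : cat) (e : hom zero X) (S : cat) (j1 j2 : hom X S),
      is_pushout e e j1 j2 ->
      exists (I : cat) (c : hom S I) (p : hom I X),
        cof _ _ c /\ we _ _ p /\ p ∘ c ∘ j1 = idm X /\ p ∘ c ∘ j2 = idm X;
  tcof_retraction : forall (X Y : cat) (f : hom X Y), cof _ _ f -> we _ _ f ->
      exists r : hom Y X, r ∘ f = idm X
}.

Arguments cof {c X Y} _.
Arguments we {c X Y} _.
Arguments zero {c}.

Record Functor (C D : Category) := {
  fobj :> C -> D;
  fmap : forall X Y : C, hom X Y -> hom (fobj X) (fobj Y);
  fmap_id : forall X : C, fmap _ _ (idm X) = idm (fobj X);
  fmap_comp : forall (X Y Z : C) (g : hom Y Z) (f : hom X Y),
      fmap _ _ (g ∘ f) = fmap _ _ g ∘ fmap _ _ f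
}.

Arguments fobj {C D} _ _.
Arguments fmap {C D} _ {X Y} _.

Definition Fcomp {C D E : Category} (F : Functor D E) (G : Functor C D) : Functor C E.
Proof.
  refine {| fobj := fun X => F (G X);
            fmap := fun X Y f => fmap F (fmap G f) |}.
  - intros X. rewrite fmap_id. apply fmap_id.
  - intros X Y Z g f. rewrite fmap_comp. apply fmap_comp.
Defined.

Definition is_morphism {C D : CylinderCategory} (F : Functor C D) : Prop :=
  (forall (X Y : C) (f : hom X Y), cof f -> cof (fmap F f)) /\
  (forall (X Y : C) (f : hom X Y), we f -> we (fmap F f)) /\
  is_initial (F zero) /\
  (forall (A B C' P : C) (f : hom A B) (g : hom A C') (j : hom B P) (k : hom C' P),
      cof f -> is_pushout f g j k ->
      is_pushout (fmap F f) (fmap F g) (fmap F j) (fmap F k)).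

(** A relative
    cylinder object is a pushout B ⊔_A B (legs j1, j2) with a cofibration
    c : B ⊔_A B -> I and weak equivalence p : I -> B with p∘c the codiagonal. *)
Definition rel_homotopic {C : CylinderCategory} {A B X : C}
           (i : hom A B) (f g : hom B X) : Prop :=
  f ∘ i = g ∘ i /\
  exists (S : C) (j1 j2 : hom B S),
    is_pushout i i j1 j2 /\
    exists (I : C) (c : hom S I) (p : hom I B),
      cof c /\ we p /\ p ∘ c ∘ j1 = idm B /\ p ∘ c ∘ j2 = idm B /\
      exists h : hom I X, h ∘ c ∘ j1 = f /\ h ∘ c ∘ j2 = g.

Definition homotopy_surjective {C D : CylinderCategory} (F : Functor C D) : Prop :=
  forall d : D, exists (c : C) (w : hom d (F c)), we w.

Definition homotopy_fully_faithful {C D : CylinderCategory} (F : Functor C D) : Prop :=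
  forall (A B X : C) (i : hom A B) (x : hom A X) (v : hom (F B) (F X)),
    cof i -> v ∘ fmap F i = fmap F x ->
    exists v' : hom B X, v' ∘ i = x /\ rel_homotopic (fmap F i) (fmap F v') v.

Definition acyclic {C D : CylinderCategory} (F : Functor C D) : Prop :=
  homotopy_surjective F /\ homotopy_fully_faithful F.

(** Inside a cylinder category we work with a flexible relation [homotopic i f g]: [f] and
   [g] are the two ends of a map out of a "weak cylinder", i.e. an object carrying two
   sections of a weak equivalence that agree along [i].  From the
   mapping cylinder construction we obtain the homotopy extension property and Whitehead's
   theorem (weak equivalences are exactly the homotopy equivalences), so a homotopy fully
   faithful morphism reflects homotopies and weak equivalences.

   The one substantial step is that [F] is homotopy fully faithful.  It is reduced to the
   property that [F] lifts retractions along every cofibration [j] ([lifts_retractions]).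
   Full faithfulness of [F ∘ G] gives this for the images under [G] of cofibrations; the
   property is invariant under weak equivalence of cofibrations and stable under suitable
   pushouts and retracts, and the acyclicity of [G ∘ H] relates every cofibration of [C] to
   the image of a cofibration of [A].  Everything else follows from composition and
   cancellation lemmas for homotopy surjective and homotopy fully faithful morphisms. *)

Set Implicit Arguments.

Section PushoutCalculus.
Context {C : Category}.

Lemma whisker2 {X Y Z : C} {a : hom Y Z} {b : hom X Y} {c : hom X Z} :
  a ∘ b = c -> forall W (x : hom Z W), x ∘ a ∘ b = x ∘ c.
Proof. intros E W x. rewrite <- comp_assoc, E. reflexivity. Qed.

Lemma whisker3 {X Y Z V : C} {a : hom Z V} {b : hom Y Z} {c : hom X Y} {d : hom X V} :
  a ∘ b ∘ c = d -> forall W (x : hom V W), x ∘ a ∘ b ∘ c = x ∘ d.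
Proof. intros E W x. rewrite <- !comp_assoc, (comp_assoc _ _ _ _ _ a), E. reflexivity. Qed.

Lemma initial_unique (Z : C) : is_initial Z -> forall X (f g : hom Z X), f = g.
Proof. intros HZ X f g. destruct (HZ X) as [h Hh]. rewrite (Hh f), (Hh g). reflexivity. Qed.

Lemma pushout_commutes {A B C' P : C} {f : hom A B} {g : hom A C'} {j : hom B P} {k : hom C' P} :
  is_pushout f g j k -> j ∘ f = k ∘ g.
Proof. intros [E _]; exact E. Qed.

Lemma pushout_factor {A B C' P : C} {f : hom A B} {g : hom A C'} {j : hom B P} {k : hom C' P} :
  is_pushout f g j k -> forall {Q} (u : hom B Q) (v : hom C' Q), u ∘ f = v ∘ g ->
  exists w : hom P Q, w ∘ j = u /\ w ∘ k = v.
Proof. intros [_ U] Q u v E. destruct (U Q u v E) as [w [[? ?] _]]. eauto. Qed.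

Lemma pushout_unique {A B C' P : C} {f : hom A B} {g : hom A C'} {j : hom B P} {k : hom C' P} :
  is_pushout f g j k -> forall {Q} (w1 w2 : hom P Q),
  w1 ∘ j = w2 ∘ j -> w1 ∘ k = w2 ∘ k -> w1 = w2.
Proof.
  intros [Ec U] Q w1 w2 E1 E2.
  assert (E : (w1 ∘ j) ∘ f = (w1 ∘ k) ∘ g) by (rewrite <- !comp_assoc, Ec; reflexivity).
  destruct (U Q _ _ E) as [w [_ Uw]].
  rewrite (Uw w1), (Uw w2); auto.
Qed.

Lemma pushout_swap {A B C' P : C} {f : hom A B} {g : hom A C'} {j : hom B P} {k : hom C' P} :
  is_pushout f g j k -> is_pushout g f k j.
Proof.
  intros [Ec U]. split; [auto|]. intros Q u v E.
  destruct (U Q v u (eq_sym E)) as [w [[? ?] Uw]].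
  exists w; split; [auto|]. intros w' ? ?. apply Uw; auto.
Qed.

Lemma pushout_paste {A B C' P B' P' : C} {f : hom A B} {g : hom A C'} {j : hom B P} {k : hom C' P}
  {f' : hom B B'} {j' : hom B' P'} {k' : hom P P'} :
  is_pushout f g j k -> is_pushout f' j j' k' -> is_pushout (f' ∘ f) g j' (k' ∘ k).
Proof.
  intros H1 H2. split.
  - rewrite comp_assoc, (pushout_commutes H2), <- !comp_assoc, (pushout_commutes H1). reflexivity.
  - intros Q u v E.
    destruct (pushout_factor H1 (u ∘ f') v) as [z [Z1 Z2]]; [rewrite <- comp_assoc; exact E|].
    destruct (pushout_factor H2 u z (eq_sym Z1)) as [w [W1 W2]].
    exists w. split; [split|].
    + exact W1.
    + rewrite comp_assoc, W2. exact Z2.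
    + intros w' X1 X2. apply (pushout_unique H2); [rewrite X1, W1; reflexivity|].
      apply (pushout_unique H1).
      * rewrite W2, Z1, <- X1, <- !comp_assoc, (pushout_commutes H2). reflexivity.
      * rewrite W2, Z2, <- X2, comp_assoc. reflexivity.
Qed.

Lemma pushout_cancel {A B A' B' I J : C} {i : hom A B} {a : hom A A'} {b : hom B B'} {i' : hom A' B'}
  {e : hom B I} {l : hom I J} {m : hom A' J} {e' : hom B' J} :
  is_pushout i a b i' -> is_pushout (e ∘ i) a l m -> e' ∘ b = l ∘ e -> e' ∘ i' = m ->
  is_pushout e b l e'.
Proof.
  intros H1 H2 E1 E2. split; [auto|].
  intros Q u v Euv.
  assert (Ec : u ∘ (e ∘ i) = (v ∘ i') ∘ a).
  { rewrite comp_assoc, Euv, <- !comp_assoc, (pushout_commutes H1). reflexivity. }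
  destruct H2 as [_ U2]. destruct (U2 Q u (v ∘ i') Ec) as [w [[W1 W2] Uw]].
  exists w. split; [split|].
  - exact W1.
  - apply (pushout_unique H1).
    + rewrite <- comp_assoc, E1, comp_assoc, W1. exact Euv.
    + rewrite <- comp_assoc, E2, W2. reflexivity.
  - intros w' X1 X2. apply Uw; auto. rewrite <- E2, comp_assoc, X2. reflexivity.
Qed.

(** For coproducts [S = X ⊔ X'] and [P = X ⊔ Y] over an initial object, the square
    formed by [X' -> S], [f : X' -> Y] and [id ⊔ f : S -> P] is a pushout. *)
Lemma coproduct_pushout {Z X X' Y S P : C} {e : hom Z X} {e' : hom Z X'} {eY : hom Z Y}
  {j1 : hom X S} {j2 : hom X' S} {iX : hom X P} {iY : hom Y P} (f : hom X' Y) (g : hom S P) :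
  is_initial Z -> is_pushout e e' j1 j2 -> is_pushout e eY iX iY ->
  g ∘ j1 = iX -> g ∘ j2 = iY ∘ f -> is_pushout j2 f g iY.
Proof.
  intros HZ HS HP G1 G2. split; [exact G2|].
  intros Q u v E.
  destruct (pushout_factor HP (u ∘ j1) v) as [w [W1 W2]]; [apply (initial_unique HZ)|].
  assert (Wg : w ∘ g = u).
  { apply (pushout_unique HS).
    - rewrite <- comp_assoc, G1. exact W1.
    - rewrite <- comp_assoc, G2, comp_assoc, W2. exact (eq_sym E). }
  exists w. split; [split; auto|].
  intros w' X1 X2. apply (pushout_unique HP); [|rewrite X2; auto].
  rewrite W1, <- X1, <- comp_assoc, G1. reflexivity.
Qed.
End PushoutCalculus.

Ltac reassoc := repeat rewrite comp_assoc.
Tactic Notation "reassoc" "in" hyp(H) := repeat rewrite comp_assoc in H.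
Ltac rewrite_chain E :=
  first [ rewrite (whisker3 E) | rewrite (whisker2 E) | rewrite E ]; reassoc.

Section CylinderBasics.
Context {C : CylinderCategory}.

Lemma we_id (X : C) : we (idm X).
Proof. apply iso_we. exists (idm X). rewrite comp_id_l. auto. Qed.

Lemma we_cancel_left {X Y Z : C} (g : hom Y Z) (f : hom X Y) : we (g ∘ f) -> we g -> we f.
Proof.
  intros Hgf Hg. destruct (we_2of6 C _ _ _ _ f g (idm Z)) as [_ [_ [Hf _]]]; auto.
  rewrite comp_id_l; auto.
Qed.

Lemma we_cancel_right {X Y Z : C} (g : hom Y Z) (f : hom X Y) : we (g ∘ f) -> we f -> we g.
Proof.
  intros Hgf Hf. destruct (we_2of6 C _ _ _ _ (idm X) f g) as [Hg _]; auto.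
  rewrite comp_id_r; auto.
Qed.

Lemma we_section {X Y : C} (r : hom Y X) (s : hom X Y) : r ∘ s = idm X -> we r -> we s.
Proof. intros E Hr. apply (we_cancel_left r s); auto. rewrite E. apply we_id. Qed.

Lemma we_retraction {X Y : C} (r : hom Y X) (s : hom X Y) : r ∘ s = idm X -> we s -> we r.
Proof. intros E Hs. apply (we_cancel_right r s); auto. rewrite E. apply we_id. Qed.

Lemma from_zero_unique (X : C) (f g : hom zero X) : f = g.
Proof. apply (initial_unique (zero_initial C)). Qed.

Lemma pushout_cof_left {A B C' P : C} {f : hom A B} {g : hom A C'} {j : hom B P} {k : hom C' P} :
  is_pushout f g j k -> cof g -> cof j.
Proof. intros H cg. exact (pushout_cof C (pushout_swap H) cg). Qed.

(** Every map extends along a trivial cofibration: push it out and use the retraction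
    of the (trivial) pushed-out cofibration. *)
Lemma extend_along_tcof {K L X : C} (t : hom K L) (m : hom K X) : cof t -> we t ->
  exists n : hom L X, n ∘ t = m.
Proof.
  intros ct wt. destruct (pushout_exists C _ _ _ t m ct) as [P [j [k HP]]].
  destruct (tcof_retraction C _ _ k (pushout_cof C HP ct) (pushout_we C HP ct wt)) as [r Hr].
  exists (r ∘ j). rewrite <- comp_assoc, (pushout_commutes HP), comp_assoc, Hr, comp_id_l. auto.
Qed.

Lemma coproduct_exists (X Y : C) :
  exists (e1 : hom zero X) (e2 : hom zero Y) (P : C) (i1 : hom X P) (i2 : hom Y P),
    is_pushout e1 e2 i1 i2 /\ cof i1 /\ cof i2.
Proof.
  destruct (zero_initial C X) as [e1 _]. destruct (zero_initial C Y) as [e2 _].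
  destruct (pushout_exists C _ _ _ e1 e2 (zero_cof C _ e1)) as [P [i1 [i2 HP]]].
  exists e1, e2, P, i1, i2. split; [exact HP|split].
  - exact (pushout_cof_left HP (zero_cof C _ e2)).
  - exact (pushout_cof C HP (zero_cof C _ e1)).
Qed.

(** Unlike the
    paper's relative cylinder objects, [J] need not be built from a pushout, which makes
    the relation easy to transport; for cofibrations [i] it agrees with [rel_homotopic]. *)
Definition homotopic {A B X : C} (i : hom A B) (f g : hom B X) : Prop :=
  exists (J : C) (e1 e2 : hom B J) (p : hom J B),
    we p /\ p ∘ e1 = idm B /\ p ∘ e2 = idm B /\ e1 ∘ i = e2 ∘ i /\
    exists h : hom J X, h ∘ e1 = f /\ h ∘ e2 = g.

Definition homotopic0 {X Y : C} (f g : hom X Y) : Prop := forall e : hom zero X, homotopic e f g.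

(** Mapping cylinder of [f : X -> Y]: the pushout [M] of a cylinder [X ⊔ X -> I] along
    [id ⊔ f : X ⊔ X -> X ⊔ Y]. *)
Lemma mapping_cylinder {X Y : C} (f : hom X Y) :
  exists (M : C) (m : hom X M) (r : hom M Y) (s : hom Y M),
    cof m /\ we r /\ cof s /\ we s /\ r ∘ m = f /\ r ∘ s = idm Y /\
    homotopic0 m (s ∘ f).
Proof.
  destruct (coproduct_exists X Y) as [eX [eY [P [iX [iY [HP [ciX ciY]]]]]]].
  destruct (pushout_exists C _ _ _ eX eX (zero_cof C _ eX)) as [S [j1 [j2 HS]]].
  destruct (cylinder C HS) as [I [c [p [cc [wp [E1 E2]]]]]].
  destruct (pushout_factor HS iX (iY ∘ f)) as [g [G1 G2]]; [apply from_zero_unique|].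
  destruct (pushout_exists C _ _ _ c g cc) as [M [a [k HM]]].
  assert (ck := pushout_cof C HM cc).
  destruct (pushout_factor HP f (idm Y)) as [q [Q1 Q2]]; [apply from_zero_unique|].
  destruct (pushout_factor HM (f ∘ p) q) as [r [R1 R2]].
  { apply (pushout_unique HS); reassoc.
    - rewrite_chain E1. rewrite comp_id_r. rewrite_chain G1. rewrite Q1. auto.
    - rewrite_chain E2. rewrite comp_id_r. rewrite_chain G2. rewrite Q2, comp_id_l. auto. }
  (* The end [s = k ∘ iY] is the pushout of the trivial cofibration [c ∘ j2] along [f]. *)
  assert (Hs : is_pushout (c ∘ j2) f a (k ∘ iY))
    by exact (pushout_paste (coproduct_pushout f g (zero_initial C) HS HP G1 G2) HM).
  assert (ccj2 : cof (c ∘ j2)) by exact (cof_comp C _ _ _ _ _ (pushout_cof C HS (zero_cof C _ eX)) cc).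
  assert (wcj2 : we (c ∘ j2)) by (apply (we_section p); [reassoc|]; auto).
  assert (ws := pushout_we C Hs ccj2 wcj2).
  assert (Rs : r ∘ (k ∘ iY) = idm Y) by (reassoc; rewrite R2, Q2; auto).
  exists M, (k ∘ iX), r, (k ∘ iY). repeat split.
  - apply cof_comp; auto.
  - exact (we_retraction r (k ∘ iY) Rs ws).
  - apply cof_comp; auto.
  - exact ws.
  - reassoc. rewrite R2, Q1. auto.
  - exact Rs.
  - intros e. exists I, (c ∘ j1), (c ∘ j2), p. repeat split; auto.
    + reassoc; auto.
    + reassoc; auto.
    + apply from_zero_unique.
    + exists a. reassoc. rewrite (pushout_commutes HM). split.
      * rewrite_chain G1. auto.
      * rewrite_chain G2. auto.
Qed.

Lemma factor_cof_we {X Y : C} (f : hom X Y) :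
  exists (M : C) (m : hom X M) (r : hom M Y), cof m /\ we r /\ r ∘ m = f.
Proof.
  destruct (mapping_cylinder f) as [M [m [r [_ [cm [wr [_ [_ [Rm _]]]]]]]]].
  exists M, m, r. auto.
Qed.

Definition is_rel_cylinder {A B : C} (i : hom A B) (S : C) (j1 j2 : hom B S) (I : C)
  (c : hom S I) (p : hom I B) : Prop :=
  is_pushout i i j1 j2 /\ cof c /\ we p /\ p ∘ c ∘ j1 = idm B /\ p ∘ c ∘ j2 = idm B.

(** Every cofibration has a relative cylinder object: factor the codiagonal. *)
Lemma rel_cylinder_exists {A B : C} {i : hom A B} :
  cof i -> exists S j1 j2 I c p, is_rel_cylinder i S j1 j2 I c p.
Proof.
  intros ci. destruct (pushout_exists C _ _ _ i i ci) as [S [j1 [j2 HS]]].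
  destruct (pushout_factor HS (idm B) (idm B)) as [d [D1 D2]]; [auto|].
  destruct (factor_cof_we d) as [M [m [r [cm [wr Rm]]]]].
  exists S, j1, j2, M, m, r. split; [exact HS|]. repeat split; auto; rewrite Rm; auto.
Qed.

Lemma rel_cylinder_ends {A B S I : C} {i : hom A B} {j1 j2 : hom B S} {c : hom S I} {p : hom I B} :
  is_rel_cylinder i S j1 j2 I c p -> cof i ->
  cof (c ∘ j1) /\ we (c ∘ j1) /\ cof (c ∘ j2) /\ we (c ∘ j2).
Proof.
  intros [HS [cc [wp [E1 E2]]]] ci.
  assert (c2 := pushout_cof C HS ci). assert (c1 := pushout_cof_left HS ci).
  repeat split; try (apply cof_comp; auto);
    [apply (we_section p) | apply (we_section p)]; reassoc; auto.
Qed.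
End CylinderBasics.

Section HomotopyCalculus.
Context {C : CylinderCategory}.

(** The cylinder [I'] is glued onto [J] and the resulting map towards
    [B] is replaced by a trivial cofibration, along which [h] extends. *)
Lemma homotopy_transport {A B X A' B' : C} (i : hom A B) (J : C) (e1 e2 : hom B J)
  (p : hom J B) (h : hom J X) (k : hom B' B) (i' : hom A' B') (a : hom A' A)
  (S' : C) (j1' j2' : hom B' S') (I' : C) (c' : hom S' I') (p' : hom I' B') :
  we p -> p ∘ e1 = idm B -> p ∘ e2 = idm B -> e1 ∘ i = e2 ∘ i -> k ∘ i' = i ∘ a ->
  is_rel_cylinder i' S' j1' j2' I' c' p' ->
  exists h' : hom I' X, h' ∘ c' ∘ j1' = h ∘ e1 ∘ k /\ h' ∘ c' ∘ j2' = h ∘ e2 ∘ k.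
Proof.
  intros wp P1 P2 Ei Hk [HS [cc [wp' [E1 E2]]]].
  destruct (pushout_factor HS (e1 ∘ k) (e2 ∘ k)) as [t [T1 T2]].
  { rewrite <- !comp_assoc, Hk, !comp_assoc, Ei. auto. }
  destruct (pushout_exists C _ _ _ c' t cc) as [P [l [kk HP]]].
  assert (ckk := pushout_cof C HP cc).
  destruct (pushout_factor HP (k ∘ p') p) as [q [Q1 Q2]].
  { apply (pushout_unique HS); reassoc.
    - rewrite_chain E1. rewrite comp_id_r. rewrite_chain T1. rewrite P1, comp_id_l. auto.
    - rewrite_chain E2. rewrite comp_id_r. rewrite_chain T2. rewrite P2, comp_id_l. auto. }
  destruct (factor_cof_we q) as [M [n [r [cn [wr Rn]]]]].
  destruct (extend_along_tcof (n ∘ kk) h) as [H0 HH].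
  - apply cof_comp; auto.
  - apply (we_cancel_left r); auto. reassoc. rewrite Rn, Q2. auto.
  - exists (H0 ∘ n ∘ l). reassoc in HH. split; reassoc.
    + rewrite_chain (pushout_commutes HP). rewrite_chain T1. rewrite HH. auto.
    + rewrite_chain (pushout_commutes HP). rewrite_chain T2. rewrite HH. auto.
Qed.

Lemma homotopic_on_rel_cylinder {A B X : C} (i : hom A B) (f g : hom B X)
  (S : C) (j1 j2 : hom B S) (I : C) (c : hom S I) (p : hom I B) :
  homotopic i f g -> is_rel_cylinder i S j1 j2 I c p ->
  exists h : hom I X, h ∘ c ∘ j1 = f /\ h ∘ c ∘ j2 = g.
Proof.
  intros [J [e1 [e2 [p0 [wp [P1 [P2 [Ei [h [H1 H2]]]]]]]]]] Hg.
  assert (Hk : idm B ∘ i = i ∘ idm A) by (rewrite comp_id_l, comp_id_r; auto).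
  destruct (homotopy_transport i J e1 e2 p0 h (idm B) (idm A) wp P1 P2 Ei Hk Hg) as [h' [X1 X2]].
  exists h'. rewrite X1, X2, !comp_id_r, H1, H2. auto.
Qed.

Lemma homotopic_of_rel_cylinder {A B X : C} (i : hom A B) (f g : hom B X)
  (S : C) (j1 j2 : hom B S) (I : C) (c : hom S I) (p : hom I B) (h : hom I X) :
  is_rel_cylinder i S j1 j2 I c p -> h ∘ c ∘ j1 = f -> h ∘ c ∘ j2 = g -> homotopic i f g.
Proof.
  intros [HS [cc [wp [E1 E2]]]] X1 X2.
  exists I, (c ∘ j1), (c ∘ j2), p. repeat split; auto.
  - reassoc; auto.
  - reassoc; auto.
  - rewrite <- !comp_assoc, (pushout_commutes HS). auto.
  - exists h. reassoc. auto.
Qed.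

Lemma rel_homotopic_of_homotopic {A B X : C} (i : hom A B) (f g : hom B X) :
  cof i -> homotopic i f g -> rel_homotopic i f g.
Proof.
  intros ci Hw. split.
  - destruct Hw as [J [e1 [e2 [p [_ [_ [_ [Ei [h [H1 H2]]]]]]]]]].
    rewrite <- H1, <- H2, <- !comp_assoc, Ei. auto.
  - destruct (rel_cylinder_exists ci) as [S [j1 [j2 [I [c [p Hg]]]]]].
    destruct (homotopic_on_rel_cylinder Hw Hg) as [h [X1 X2]].
    destruct Hg as [HS [cc [wp [E1 E2]]]].
    exists S, j1, j2. split; auto. exists I, c, p. repeat split; auto. exists h; auto.
Qed.

Lemma homotopic_of_rel_homotopic {A B X : C} (i : hom A B) (f g : hom B X) :
  rel_homotopic i f g -> homotopic i f g.
Proof.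
  intros [_ [S [j1 [j2 [HS [I [c [p [cc [wp [E1 [E2 [h [X1 X2]]]]]]]]]]]]]].
  exact (homotopic_of_rel_cylinder h (conj HS (conj cc (conj wp (conj E1 E2)))) X1 X2).
Qed.

Lemma homotopic_sym {A B X : C} (i : hom A B) (f g : hom B X) :
  homotopic i f g -> homotopic i g f.
Proof.
  intros [J [e1 [e2 [p [wp [P1 [P2 [Ei [h [H1 H2]]]]]]]]]].
  exists J, e2, e1, p. repeat split; auto. exists h; auto.
Qed.

(** Transitivity: glue the second homotopy (on a relative cylinder) to the first one
    along a trivial cofibration. *)
Lemma homotopic_trans {A B X : C} (i : hom A B) (f g k : hom B X) :
  cof i -> homotopic i f g -> homotopic i g k -> homotopic i f k.
Proof.
  intros ci [J [e1 [e2 [p1 [wp [P1 [P2 [Ei [h1 [H1 H2]]]]]]]]]] W2.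
  destruct (rel_cylinder_exists ci) as [S [j1 [j2 [I [c [p Hg]]]]]].
  destruct (homotopic_on_rel_cylinder W2 Hg) as [h2 [X1 X2]].
  destruct (rel_cylinder_ends Hg ci) as [ce1 [we1 _]].
  destruct Hg as [HS [cc [wp' [E1 E2]]]].
  destruct (pushout_exists C _ _ _ (c ∘ j1) e2 ce1) as [K [l [kk HK]]].
  assert (wk := pushout_we C HK ce1 we1).
  destruct (pushout_factor HK p p1) as [pk [K1 K2]]; [reassoc; rewrite E1, P2; auto|].
  destruct (pushout_factor HK h2 h1) as [hk [L1 L2]]; [reassoc; rewrite X1, H2; auto|].
  exists K, (kk ∘ e1), (l ∘ (c ∘ j2)), pk. repeat split.
  - apply (we_cancel_right pk kk); auto. rewrite K2. auto.
  - reassoc. rewrite K2. auto.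
  - reassoc. rewrite K1. auto.
  - rewrite <- !comp_assoc, Ei, !comp_assoc, <- (pushout_commutes HK).
    rewrite <- !comp_assoc, (pushout_commutes HS). auto.
  - exists hk. reassoc. rewrite L1, L2. auto.
Qed.

Lemma homotopic_postcomp {A B X Y : C} (i : hom A B) (f g : hom B X) (u : hom X Y) :
  homotopic i f g -> homotopic i (u ∘ f) (u ∘ g).
Proof.
  intros [J [e1 [e2 [p [wp [P1 [P2 [Ei [h [H1 H2]]]]]]]]]].
  exists J, e1, e2, p. repeat split; auto. exists (u ∘ h). rewrite <- !comp_assoc, H1, H2. auto.
Qed.

Lemma homotopic_precomp {A B X A' B' : C} (i : hom A B) (f g : hom B X) (k : hom B' B)
  (i' : hom A' B') (a : hom A' A) :
  homotopic i f g -> cof i' -> k ∘ i' = i ∘ a -> homotopic i' (f ∘ k) (g ∘ k).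
Proof.
  intros [J [e1 [e2 [p0 [wp [P1 [P2 [Ei [h [H1 H2]]]]]]]]]] ci Hk.
  destruct (rel_cylinder_exists ci) as [S [j1 [j2 [I [c [p Hg]]]]]].
  destruct (homotopy_transport i J e1 e2 p0 h k a wp P1 P2 Ei Hk Hg) as [h' [X1 X2]].
  apply (homotopic_of_rel_cylinder h' Hg); [rewrite X1, H1 | rewrite X2, H2]; auto.
Qed.

Lemma homotopic_we {A B X : C} (i : hom A B) (f g : hom B X) : homotopic i f g -> we f -> we g.
Proof.
  intros [J [e1 [e2 [p [wp [P1 [P2 [Ei [h [H1 H2]]]]]]]]]] wf.
  assert (w1 : we e1) by (apply (we_section p); auto).
  assert (w2 : we e2) by (apply (we_section p); auto).
  assert (wh : we h) by (apply (we_cancel_right h e1); [rewrite H1|]; auto).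
  rewrite <- H2. apply we_comp; auto.
Qed.

Lemma homotopic_rebase_initial {A A' B X : C} (i : hom A B) (i' : hom A' B) (f g : hom B X) :
  is_initial A' -> homotopic i f g -> homotopic i' f g.
Proof.
  intros HA [J [e1 [e2 [p [wp [P1 [P2 [Ei [h [H1 H2]]]]]]]]]].
  exists J, e1, e2, p. repeat split; auto. apply (initial_unique HA). exists h; auto.
Qed.
End HomotopyCalculus.

Lemma homotopic_fmap {C D : CylinderCategory} (P : Functor C D)
  (Pwe : forall (X Y : C) (f : hom X Y), we f -> we (fmap P f))
  {A B X : C} (i : hom A B) (f g : hom B X) :
  homotopic i f g -> homotopic (fmap P i) (fmap P f) (fmap P g).
Proof.
  intros [J [e1 [e2 [p [wp [P1 [P2 [Ei [h [H1 H2]]]]]]]]]].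
  exists (P J), (fmap P e1), (fmap P e2), (fmap P p). repeat split.
  - apply Pwe; auto.
  - rewrite <- fmap_comp, P1, fmap_id. auto.
  - rewrite <- fmap_comp, P2, fmap_id. auto.
  - rewrite <- !fmap_comp, Ei. auto.
  - exists (fmap P h). rewrite <- !fmap_comp, H1, H2. auto.
Qed.

Section HomotopyTheory.
Context {C : CylinderCategory}.

Lemma homotopic_tcof_retraction {X0 X1 : C} (s : hom X0 X1) (r : hom X1 X0) :
  cof s -> we s -> r ∘ s = idm X0 -> homotopic s (s ∘ r) (idm X1).
Proof.
  intros cs ws E.
  destruct (rel_cylinder_exists cs) as [S [j1 [j2 [I [c [p Hg]]]]]].
  destruct (rel_cylinder_ends Hg cs) as [_ [we1 _]].
  pose proof Hg as [HS [cc _]].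
  assert (wc : we c) by exact (we_cancel_right c j1 we1 (pushout_we C (pushout_swap HS) cs ws)).
  destruct (pushout_factor HS (s ∘ r) (idm X1)) as [x [Q1 Q2]].
  { rewrite <- comp_assoc, E, comp_id_l, comp_id_r. auto. }
  destruct (extend_along_tcof c x cc wc) as [H HH].
  apply (homotopic_of_rel_cylinder H Hg); rewrite HH; auto.
Qed.

Lemma homotopy_extension {U Y Z : C} (j : hom U Y) (f : hom Y Z) (g0 : hom U Z) (eU : hom zero U) :
  cof j -> homotopic eU (f ∘ j) g0 -> exists f' : hom Y Z, f' ∘ j = g0 /\ homotopic0 f f'.
Proof.
  intros cj Hw.
  destruct (rel_cylinder_exists (zero_cof C _ eU)) as [S [j1 [j2 [I [c [p Hg]]]]]].
  destruct (homotopic_on_rel_cylinder Hw Hg) as [h [X1 X2]].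
  destruct (rel_cylinder_ends Hg (zero_cof C _ eU)) as [ce1 [we1 [ce2 _]]].
  destruct Hg as [HS [cc [wp [E1 E2]]]].
  (* [Q = I ∪_U Y] is the cylinder on [U] with [Y] attached at one end *)
  destruct (pushout_exists C _ _ _ (c ∘ j1) j ce1) as [Q [l [k HQ]]].
  assert (ck := pushout_cof C HQ ce1). assert (wk := pushout_we C HQ ce1 we1).
  assert (cl := pushout_cof_left HQ cj).
  (* [Q'] additionally has [Y] attached at the other end *)
  destruct (pushout_exists C _ _ _ (l ∘ (c ∘ j2)) j (cof_comp C _ _ _ _ _ ce2 cl))
    as [Q' [nu [e2' HQ']]].
  assert (cnu := pushout_cof_left HQ' cj).
  destruct (pushout_factor HQ (j ∘ p) (idm Y)) as [qm [M1 M2]].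
  { reassoc. rewrite_chain E1. rewrite comp_id_r, comp_id_l. auto. }
  destruct (pushout_factor HQ' qm (idm Y)) as [q' [N1 N2]].
  { reassoc. rewrite M1. rewrite_chain E2. rewrite comp_id_r, comp_id_l. auto. }
  destruct (factor_cof_we q') as [T [n [r [cn [wr Rn]]]]].
  destruct (pushout_factor HQ h f) as [hf [F1 F2]]; [reassoc; auto|].
  assert (Re1 : r ∘ (n ∘ nu ∘ k) = idm Y) by (reassoc; rewrite Rn, N1, M2; auto).
  destruct (extend_along_tcof (n ∘ nu) hf) as [Hx HX].
  - apply cof_comp; auto.
  - apply (we_cancel_right (n ∘ nu) k); auto. apply (we_section r); auto.
  - reassoc in HX. exists (Hx ∘ n ∘ e2'). split.
    + rewrite_chain (eq_sym (pushout_commutes HQ')). rewrite HX. rewrite_chain F1. auto.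
    + intros eY. exists T, (n ∘ nu ∘ k), (n ∘ e2'), r. repeat split; auto.
      * reassoc. rewrite Rn, N2. auto.
      * apply from_zero_unique.
      * exists Hx. split; reassoc; auto. rewrite HX, F2. auto.
Qed.

Lemma we_left_inverse {X Y : C} (f : hom X Y) :
  we f -> exists g : hom Y X, we g /\ homotopic0 (g ∘ f) (idm X).
Proof.
  intros wf. destruct (mapping_cylinder f) as [M [m [r [s [cm [wr [_ [_ [Rm [_ HW]]]]]]]]]].
  assert (wm : we m) by (apply (we_cancel_left r m); [rewrite Rm|]; auto).
  destruct (tcof_retraction C _ _ m cm wm) as [rho Hr].
  assert (K : homotopic0 (rho ∘ s ∘ f) (idm X)).
  { intros e. apply homotopic_sym. rewrite <- Hr, <- comp_assoc. apply homotopic_postcomp, HW. }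
  exists (rho ∘ s). split; auto.
  apply (we_cancel_right (rho ∘ s) f); auto.
  destruct (zero_initial C X) as [e _].
  apply (homotopic_we (homotopic_sym (K e))), we_id.
Qed.

Lemma we_homotopy_equivalence {X Y : C} (f : hom X Y) :
  we f -> exists g : hom Y X, homotopic0 (g ∘ f) (idm X) /\ homotopic0 (f ∘ g) (idm Y).
Proof.
  intros wf. destruct (we_left_inverse f wf) as [g [wg H1]].
  destruct (we_left_inverse g wg) as [g' [_ H2]].
  exists g. split; auto. intros eY.
  destruct (zero_initial C X) as [eX _].
  (* [g'] is also a homotopy inverse of [g], hence homotopic to [f] *)
  assert (A1 : homotopic eX (g' ∘ g ∘ f) f).
  { rewrite <- (comp_id_l _ _ _ f) at 2.
    eapply homotopic_precomp; [apply (H2 eY) | apply (zero_cof C _ eX) |].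
    rewrite comp_id_r. apply from_zero_unique. }
  assert (A2 : homotopic eX (g' ∘ g ∘ f) g').
  { rewrite <- comp_assoc. rewrite <- (comp_id_r _ _ _ g') at 2. apply homotopic_postcomp, H1. }
  assert (A3 : homotopic eX g' f) by exact (homotopic_trans (zero_cof C _ eX) (homotopic_sym A2) A1).
  assert (A4 : homotopic eY (g' ∘ g) (f ∘ g)).
  { eapply homotopic_precomp; [apply A3 | apply (zero_cof C _ eY) |].
    rewrite comp_id_r. apply from_zero_unique. }
  exact (homotopic_trans (zero_cof C _ eY) (homotopic_sym A4) (H2 eY)).
Qed.

Lemma we_of_homotopy_equivalence {X Y : C} {f : hom X Y} {g : hom Y X} {eX : hom zero X}
  {eY : hom zero Y} : homotopic eX (g ∘ f) (idm X) -> homotopic eY (f ∘ g) (idm Y) -> we f.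
Proof.
  intros A B.
  destruct (we_2of6 C _ _ _ _ f g f) as [H _].
  - exact (homotopic_we (homotopic_sym B) (we_id _)).
  - exact (homotopic_we (homotopic_sym A) (we_id _)).
  - exact H.
Qed.

Lemma homotopic_cancel_tcof {X Y Y' Z : C} (j : hom X Y) (b : hom Y Y') (f g : hom Y' Z) :
  cof j -> cof b -> we b -> homotopic j (f ∘ b) (g ∘ b) -> homotopic (b ∘ j) f g.
Proof.
  intros cj cb wb Hw.
  destruct (rel_cylinder_exists cj) as [S [j1 [j2 [I [c [p Hg]]]]]].
  destruct (homotopic_on_rel_cylinder Hw Hg) as [h [X1 X2]].
  destruct (rel_cylinder_ends Hg cj) as [ce1 [we1 _]].
  destruct Hg as [HS [cc [wp [E1 E2]]]].
  (* the new cylinder [J] is [I] with [Y'] attached at both ends along [b] *)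
  destruct (pushout_exists C _ _ _ (c ∘ j1) b ce1) as [Q1 [l [k HQ1]]].
  assert (ck := pushout_cof C HQ1 ce1). assert (wk := pushout_we C HQ1 ce1 we1).
  destruct (pushout_exists C _ _ _ b (l ∘ (c ∘ j2)) cb) as [J [e2' [nu HQ2]]].
  assert (wnu := pushout_we C HQ2 cb wb).
  destruct (pushout_factor HQ1 (b ∘ p) (idm Y')) as [p1 [P1a P1b]].
  { reassoc. rewrite_chain E1. rewrite comp_id_r, comp_id_l. auto. }
  destruct (pushout_factor HQ2 (idm Y') p1) as [pJ [PJ1 PJ2]].
  { reassoc. rewrite P1a. rewrite_chain E2. rewrite comp_id_r, comp_id_l. auto. }
  destruct (pushout_factor HQ1 h f) as [h1 [H1a H1b]]; [reassoc; auto|].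
  destruct (pushout_factor HQ2 g h1) as [hJ [HJ1 HJ2]]; [reassoc; rewrite H1a; auto|].
  assert (Pe1 : pJ ∘ (nu ∘ k) = idm Y') by (reassoc; rewrite PJ2, P1b; auto).
  exists J, (nu ∘ k), e2', pJ. repeat split; auto.
  - apply (we_retraction pJ (nu ∘ k) Pe1). apply we_comp; auto.
  - reassoc. rewrite_chain (eq_sym (pushout_commutes HQ1)).
    rewrite_chain (pushout_commutes HQ2).
    rewrite <- !comp_assoc, (pushout_commutes HS). auto.
  - exists hJ. split; reassoc; [rewrite HJ2, H1b|]; auto.
Qed.

Lemma homotopic_glue {A B A' B' Z : C} (i : hom A B) (al : hom A A') (b : hom B B')
  (i' : hom A' B') (f g : hom B' Z) :
  is_pushout i al b i' -> cof i -> f ∘ i' = g ∘ i' ->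
  homotopic i (f ∘ b) (g ∘ b) -> homotopic i' f g.
Proof.
  intros HP ci Efg Hw.
  destruct (rel_cylinder_exists ci) as [S [j1 [j2 [I [c [p Hg]]]]]].
  destruct (homotopic_on_rel_cylinder Hw Hg) as [h [X1 X2]].
  destruct (rel_cylinder_ends Hg ci) as [ce1 [we1 _]].
  destruct Hg as [HS [cc [wp [E1 E2]]]].
  (* the glued cylinder [J = I ∪_A A'] *)
  destruct (pushout_exists C _ _ _ (c ∘ j1 ∘ i) al (cof_comp C _ _ _ _ _ ci ce1)) as [J [l [mu HJ]]].
  assert (Ej : c ∘ j2 ∘ i = c ∘ j1 ∘ i) by (rewrite <- !comp_assoc, (pushout_commutes HS); auto).
  destruct (pushout_factor HP (l ∘ (c ∘ j1)) mu) as [e1' [Ea Eb]].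
  { rewrite <- (pushout_commutes HJ). reassoc. auto. }
  destruct (pushout_factor HP (l ∘ (c ∘ j2)) mu) as [e2' [Ec Ed]].
  { rewrite <- (pushout_commutes HJ). reassoc. rewrite_chain Ej. auto. }
  destruct (pushout_factor HJ (b ∘ p) i') as [p' [Q1 Q2]].
  { reassoc. rewrite_chain E1. rewrite comp_id_r. apply (pushout_commutes HP). }
  destruct (pushout_factor HJ h (f ∘ i')) as [h' [R1 R2]].
  { reassoc. rewrite_chain X1. rewrite_chain (pushout_commutes HP). auto. }
  assert (Hsq : is_pushout (c ∘ j1) b l e1') by exact (pushout_cancel HP HJ Ea Eb).
  assert (Pe1 : p' ∘ e1' = idm B').
  { apply (pushout_unique HP).
    - rewrite_chain Ea. rewrite Q1. rewrite_chain E1. rewrite comp_id_r, comp_id_l. auto.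
    - rewrite_chain Eb. rewrite Q2, comp_id_l. auto. }
  exists J, e1', e2', p'. repeat split; auto.
  - exact (we_retraction p' e1' Pe1 (pushout_we C Hsq ce1 we1)).
  - apply (pushout_unique HP).
    + rewrite_chain Ec. rewrite Q1. rewrite_chain E2. rewrite comp_id_r, comp_id_l. auto.
    + rewrite_chain Ed. rewrite Q2, comp_id_l. auto.
  - rewrite Eb, Ed. auto.
  - exists h'. split; apply (pushout_unique HP);
      [rewrite_chain Ea | rewrite_chain Eb | rewrite_chain Ec | rewrite_chain Ed];
      [rewrite R1 | rewrite R2 | rewrite R1 | rewrite R2]; auto.
Qed.
End HomotopyTheory.

Section MorphismProperties.
Context {C D : CylinderCategory} {P : Functor C D}.
Hypothesis HP : is_morphism P.

Lemma morphism_cof {X Y : C} {f : hom X Y} : cof f -> cof (fmap P f).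
Proof. destruct HP as [Pc _]. auto. Qed.

Lemma morphism_we {X Y : C} {f : hom X Y} : we f -> we (fmap P f).
Proof. destruct HP as [_ [Pw _]]. auto. Qed.

Lemma morphism_initial : is_initial (P zero).
Proof. destruct HP as [_ [_ [Pi _]]]. exact Pi. Qed.

Lemma morphism_pushout {A B C' Q : C} {f : hom A B} {g : hom A C'} {j : hom B Q} {k : hom C' Q} :
  cof f -> is_pushout f g j k -> is_pushout (fmap P f) (fmap P g) (fmap P j) (fmap P k).
Proof. destruct HP as [_ [_ [_ Ppo]]]. auto. Qed.

Lemma rel_cylinder_fmap {A B S I : C} {i : hom A B} {j1 j2 : hom B S} {c : hom S I} {p : hom I B} :
  cof i -> is_rel_cylinder i S j1 j2 I c p ->
  is_rel_cylinder (fmap P i) (P S) (fmap P j1) (fmap P j2) (P I) (fmap P c) (fmap P p).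
Proof.
  intros ci [HS [cc [wp [E1 E2]]]].
  split; [exact (morphism_pushout ci HS)|].
  split; [exact (morphism_cof cc)|]. split; [exact (morphism_we wp)|].
  split; rewrite <- !fmap_comp; [rewrite E1 | rewrite E2]; apply fmap_id.
Qed.
End MorphismProperties.

Section HomotopyFullyFaithful.
Context {C D : CylinderCategory} {P : Functor C D}.
Hypothesis HP : is_morphism P.
Hypothesis HF : homotopy_fully_faithful P.

(** A homotopy fully faithful morphism reflects relative homotopies: lift the image
    homotopy, defined on the image of a relative cylinder, along its cofibration [c]. *)
Lemma reflect_homotopic {A B X : C} (i : hom A B) (f g : hom B X) :
  cof i -> f ∘ i = g ∘ i -> homotopic (fmap P i) (fmap P f) (fmap P g) -> homotopic i f g.
Proof.
  intros ci Efg Hw.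
  destruct (rel_cylinder_exists ci) as [S [j1 [j2 [I [c [p Hg]]]]]].
  destruct (homotopic_on_rel_cylinder Hw (rel_cylinder_fmap HP ci Hg)) as [h' [X1 X2]].
  pose proof Hg as [HS [cc _]].
  destruct (pushout_factor HS f g Efg) as [x [Y1 Y2]].
  destruct (HF _ _ _ c x h' cc) as [v' [V1 _]].
  { apply (pushout_unique (morphism_pushout HP ci HS)).
    - rewrite X1, <- fmap_comp, Y1. auto.
    - rewrite X2, <- fmap_comp, Y2. auto. }
  apply (homotopic_of_rel_cylinder v' Hg); rewrite V1; auto.
Qed.

(** A homotopy fully faithful morphism reflects weak equivalences: a homotopy inverse of
    [P f] lifts to a homotopy inverse of [f]. *)
Lemma reflect_we {X Y : C} (f : hom X Y) : we (fmap P f) -> we f.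
Proof.
  intros wf. destruct (we_homotopy_equivalence _ wf) as [g0 [G1 G2]].
  destruct (zero_initial C X) as [eX _]. destruct (zero_initial C Y) as [eY _].
  destruct (HF _ _ _ eY eX g0 (zero_cof C _ eY)) as [g [_ Gg]].
  { apply (initial_unique (morphism_initial HP)). }
  apply homotopic_of_rel_homotopic in Gg.
  destruct (zero_initial D (P X)) as [dX _]. destruct (zero_initial D (P Y)) as [dY _].
  assert (cX : cof (fmap P eX)) by exact (morphism_cof HP (zero_cof C _ eX)).
  assert (cY : cof (fmap P eY)) by exact (morphism_cof HP (zero_cof C _ eY)).
  assert (A : homotopic (fmap P eX) (fmap P (g ∘ f)) (fmap P (idm X))).
  { rewrite fmap_id. apply (homotopic_trans (g := g0 ∘ fmap P f) cX).
    - rewrite fmap_comp. eapply homotopic_precomp; [apply Gg | apply cX |].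
      rewrite comp_id_r, <- fmap_comp. f_equal. apply from_zero_unique.
    - apply (homotopic_rebase_initial _ (morphism_initial HP) (G1 dX)). }
  assert (B : homotopic (fmap P eY) (fmap P (f ∘ g)) (fmap P (idm Y))).
  { rewrite fmap_id. apply (homotopic_trans (g := fmap P f ∘ g0) cY).
    - rewrite fmap_comp. apply homotopic_postcomp, Gg.
    - apply (homotopic_rebase_initial _ (morphism_initial HP) (G2 dY)). }
  apply reflect_homotopic in A; [|apply zero_cof|apply from_zero_unique].
  apply reflect_homotopic in B; [|apply zero_cof|apply from_zero_unique].
  exact (we_of_homotopy_equivalence A B).
Qed.
End HomotopyFullyFaithful.

(** For all cofibrations [j] this is equivalent
    to [P] being homotopy fully faithful, and it is the form of full faithfulness that
    can be transported along weak equivalences and pushouts. *)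
Definition lifts_retractions {C D : CylinderCategory} (P : Functor C D) {X Y : C}
  (j : hom X Y) : Prop :=
  forall rho : hom (P Y) (P X), rho ∘ fmap P j = idm (P X) ->
  exists r : hom Y X, r ∘ j = idm X /\ homotopic (fmap P j) (fmap P r) rho.

Section LiftingRetractions.
Context {C D : CylinderCategory} {P : Functor C D}.
Hypothesis HP : is_morphism P.

Lemma lifts_retractions_pushout_retract {X Y M YM : C} (j : hom X Y) (m : hom X M)
  (sg : hom M X) (m' : hom Y YM) (jM : hom M YM) :
  cof j -> sg ∘ m = idm X -> is_pushout j m m' jM ->
  lifts_retractions P jM -> lifts_retractions P j.
Proof.
  intros cj Hs HPo R rho Er.
  destruct (pushout_factor (morphism_pushout HP cj HPo) (fmap P m ∘ rho) (idm (P M)))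
    as [rM [A1 A2]].
  { rewrite <- comp_assoc, Er, comp_id_r, comp_id_l. auto. }
  destruct (R rM A2) as [r' [Rr Wr]].
  exists (sg ∘ r' ∘ m'). split.
  - rewrite_chain (pushout_commutes HPo). rewrite_chain Rr. rewrite comp_id_r. auto.
  - assert (W := homotopic_postcomp (fmap P sg)
      (homotopic_precomp (fmap P m') (fmap P j) (fmap P m) Wr (morphism_cof HP cj)
         ltac:(rewrite <- !fmap_comp, (pushout_commutes HPo); auto))).
    rewrite A1 in W. rewrite !fmap_comp. reassoc. reassoc in W.
    rewrite <- (fmap_comp P _ _ _ sg m), Hs, fmap_id, comp_id_l in W. exact W.
Qed.

Lemma lifts_retractions_of_postcomp {X Y Y' : C} (j : hom X Y) (b : hom Y Y') (pi : hom Y' Y) :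
  pi ∘ b = idm Y -> cof j -> lifts_retractions P (b ∘ j) -> lifts_retractions P j.
Proof.
  intros Hpb cj R rho Er.
  destruct (R (rho ∘ fmap P pi)) as [r' [Rr Wr]].
  { rewrite fmap_comp. reassoc.
    rewrite <- (comp_assoc _ _ _ _ _ _ (fmap P pi)), <- fmap_comp, Hpb, fmap_id, comp_id_r. auto. }
  exists (r' ∘ b). split.
  - reassoc in Rr. reassoc. auto.
  - assert (W := homotopic_precomp (fmap P b) (fmap P j) (idm _) Wr (morphism_cof HP cj)
                   ltac:(rewrite comp_id_r, fmap_comp; auto)).
    rewrite fmap_comp.
    rewrite <- comp_assoc, <- (fmap_comp P _ _ _ pi b), Hpb, fmap_id, comp_id_r in W. exact W.
Qed.

Lemma lifts_retractions_postcomp {X Y Y' : C} (j : hom X Y) (b : hom Y Y') :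
  cof j -> cof b -> we b -> lifts_retractions P j -> lifts_retractions P (b ∘ j).
Proof.
  intros cj cb wb R rho Er.
  destruct (R (rho ∘ fmap P b)) as [r [Rr Wr]].
  { rewrite <- comp_assoc, <- fmap_comp. auto. }
  destruct (extend_along_tcof b r cb wb) as [r' Hr'].
  exists r'. split.
  - rewrite comp_assoc, Hr'. auto.
  - rewrite fmap_comp.
    apply homotopic_cancel_tcof;
      [exact (morphism_cof HP cj) | exact (morphism_cof HP cb) | exact (morphism_we HP wb) |].
    rewrite <- fmap_comp, Hr'. auto.
Qed.

Lemma lifts_retractions_pushout {X0 Y0 X1 Y1 : C} (j0 : hom X0 Y0) (s : hom X0 X1)
  (s' : hom Y0 Y1) (j1 : hom X1 Y1) :
  cof j0 -> cof s -> we s -> is_pushout j0 s s' j1 ->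
  lifts_retractions P j0 -> lifts_retractions P j1.
Proof.
  intros cj0 cs ws HPo R rho1 E1.
  destruct (tcof_retraction C _ _ s cs ws) as [sg Hsg].
  assert (Ecomm : fmap P s' ∘ fmap P j0 = fmap P j1 ∘ fmap P s)
    by (rewrite <- !fmap_comp, (pushout_commutes HPo); auto).
  destruct (R (fmap P sg ∘ rho1 ∘ fmap P s')) as [r0 [R0 W0]].
  { reassoc. rewrite_chain Ecomm. rewrite_chain E1.
    rewrite comp_id_r, <- fmap_comp, Hsg, fmap_id. auto. }
  destruct (pushout_factor HPo (s ∘ r0) (idm X1)) as [r1 [A1 A2]].
  { rewrite <- comp_assoc, R0, comp_id_r, comp_id_l. auto. }
  exists r1. split; [auto|].
  apply (homotopic_glue (fmap P r1) rho1 (morphism_pushout HP cj0 HPo) (morphism_cof HP cj0)).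
  - rewrite <- fmap_comp, A2, fmap_id, E1. auto.
  - rewrite <- fmap_comp, A1, fmap_comp.
    apply (homotopic_trans (g := fmap P s ∘ (fmap P sg ∘ rho1 ∘ fmap P s')) (morphism_cof HP cj0)).
    + apply homotopic_postcomp. exact W0.
    + assert (T := homotopic_tcof_retraction (fmap P s) (fmap P sg) (morphism_cof HP cs)
                     (morphism_we HP ws) ltac:(rewrite <- fmap_comp, Hsg, fmap_id; auto)).
      assert (T' := homotopic_precomp (rho1 ∘ fmap P s') (fmap P j0) (idm _) T (morphism_cof HP cj0)
                     ltac:(rewrite <- comp_assoc, Ecomm, comp_assoc, E1, comp_id_l, comp_id_r; auto)).
      rewrite comp_id_l in T'. reassoc in T'. reassoc. exact T'.
Qed.

(** Invariance under weak equivalence of cofibrations [j' = t ∘ j]: both are related,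
    by postcomposition with trivial cofibrations having retractions, to the cofibrations
    into a common cofibrant replacement of [Y ∪_X Y']. *)
Lemma lifts_retractions_we_invariant {X Y Y' : C} (j : hom X Y) (j' : hom X Y') (t : hom Y Y') :
  cof j -> cof j' -> we t -> t ∘ j = j' -> (lifts_retractions P j <-> lifts_retractions P j').
Proof.
  intros cj cj' wt Et.
  destruct (pushout_exists C _ _ _ j j' cj) as [Q [a1 [a2 HQ]]].
  assert (ca2 := pushout_cof C HQ cj). assert (ca1 := pushout_cof_left HQ cj').
  destruct (pushout_factor HQ t (idm Y')) as [psi [S1 S2]]; [rewrite comp_id_l; auto|].
  destruct (factor_cof_we psi) as [N [n [r [cn [wr Rn]]]]].
  assert (c1 : cof (n ∘ a1)) by (apply cof_comp; auto).
  assert (c2 : cof (n ∘ a2)) by (apply cof_comp; auto).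
  assert (w1 : we (n ∘ a1)) by (apply (we_cancel_left r); auto; reassoc; rewrite Rn, S1; auto).
  assert (w2 : we (n ∘ a2)) by (apply (we_section r); auto; reassoc; rewrite Rn, S2; auto).
  assert (E : n ∘ a1 ∘ j = n ∘ a2 ∘ j') by (rewrite <- !comp_assoc, (pushout_commutes HQ); auto).
  destruct (tcof_retraction C _ _ _ c1 w1) as [p1 Hp1].
  destruct (tcof_retraction C _ _ _ c2 w2) as [p2 Hp2].
  split; intro R.
  - apply (lifts_retractions_of_postcomp j' (n ∘ a2) p2 Hp2 cj').
    rewrite <- E. apply lifts_retractions_postcomp; auto.
  - apply (lifts_retractions_of_postcomp j (n ∘ a1) p1 Hp1 cj).
    rewrite E. apply lifts_retractions_postcomp; auto.
Qed.

(** Lifting retractions along all cofibrations implies homotopy full faithfulness: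
    a map [v : P B -> P X] under [P x] is a retraction of [P] applied to the pushout
    [X -> B ∪_A X]. *)
Lemma hff_of_lifts_retractions :
  (forall (X Y : C) (j : hom X Y), cof j -> lifts_retractions P j) -> homotopy_fully_faithful P.
Proof.
  intros HR A B X i x v ci Ev.
  destruct (pushout_exists C _ _ _ i x ci) as [Y [jB [j HY]]].
  assert (cj := pushout_cof C HY ci).
  destruct (pushout_factor (morphism_pushout HP ci HY) v (idm (P X))) as [rho [R1 R2]];
    [rewrite comp_id_l; auto|].
  destruct (HR _ _ j cj rho R2) as [r [Rr W]].
  exists (r ∘ jB). split.
  - rewrite <- comp_assoc, (pushout_commutes HY), comp_assoc, Rr, comp_id_l. auto.
  - apply rel_homotopic_of_homotopic; [exact (morphism_cof HP ci)|].
    rewrite fmap_comp, <- R1.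
    apply (homotopic_precomp (fmap P jB) (fmap P i) (fmap P x) W (morphism_cof HP ci)).
    rewrite <- !fmap_comp, (pushout_commutes HY). auto.
Qed.
End LiftingRetractions.

Lemma morphism_preserves_initial {B C : CylinderCategory} {G : Functor B C} :
  is_morphism G -> forall Z : B, is_initial Z -> is_initial (G Z).
Proof.
  intros mG Z HZ X.
  destruct (zero_initial B Z) as [e _]. destruct (HZ zero) as [psi _].
  destruct (morphism_initial mG X) as [f0 _].
  exists (f0 ∘ fmap G psi). intros g.
  assert (E : e ∘ psi = idm Z) by apply (initial_unique HZ).
  rewrite <- (comp_id_r _ _ _ g), <- fmap_id, <- E, fmap_comp, comp_assoc.
  f_equal. apply (initial_unique (morphism_initial mG)).
Qed.

Lemma morphism_comp {B C D : CylinderCategory} {F : Functor C D} {G : Functor B C} :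
  is_morphism F -> is_morphism G -> is_morphism (Fcomp F G).
Proof.
  intros mF mG. split; [|split; [|split]].
  - intros X Y f cf. exact (morphism_cof mF (morphism_cof mG cf)).
  - intros X Y f wf. exact (morphism_we mF (morphism_we mG wf)).
  - exact (morphism_preserves_initial mF (morphism_initial mG)).
  - intros A' B' C' P f g j k cf Hp.
    exact (morphism_pushout mF (morphism_cof mG cf) (morphism_pushout mG cf Hp)).
Qed.

(** Choose [w : Y -> L q1], lift [w ∘ j] to [mu : a -> q1] up to
    homotopy, replace [mu] by the cofibration [k] of its mapping cylinder, and straighten
    the resulting homotopy [L k ~ L s ∘ w ∘ j] by homotopy extension. *)
Lemma acyclic_rel_surjective {A C : CylinderCategory} {L : Functor A C} :
  is_morphism L -> acyclic L ->
  forall (a : A) (Y : C) (j : hom (L a) Y), cof j ->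
  exists (q : A) (k : hom a q) (t : hom Y (L q)), cof k /\ we t /\ t ∘ j = fmap L k.
Proof.
  intros mL [hsL hffL] a Y j cj.
  destruct (hsL Y) as [q1 [w ww]].
  destruct (zero_initial A a) as [ea _]. destruct (zero_initial A q1) as [eq1 _].
  destruct (hffL _ _ _ ea eq1 (w ∘ j) (zero_cof A _ ea)) as [mu [_ Mh]].
  { apply (initial_unique (morphism_initial mL)). }
  destruct (mapping_cylinder mu) as [q [k [_ [s [ck [_ [_ [ws [_ [_ HW]]]]]]]]]].
  assert (cL : cof (fmap L ea)) by exact (morphism_cof mL (zero_cof A _ ea)).
  assert (W : homotopic (fmap L ea) (fmap L s ∘ w ∘ j) (fmap L k)).
  { apply (homotopic_trans (g := fmap L s ∘ fmap L mu) cL).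
    - rewrite <- comp_assoc. apply homotopic_postcomp, homotopic_sym, homotopic_of_rel_homotopic, Mh.
    - apply homotopic_sym. rewrite <- fmap_comp.
      exact (homotopic_fmap L (fun _ _ _ => morphism_we mL) (HW ea)). }
  destruct (zero_initial C (L a)) as [eU _].
  destruct (homotopy_extension j (fmap L s ∘ w) cj
              (homotopic_rebase_initial eU (zero_initial C) W)) as [t [Tj TW]].
  exists q, k, t. split; [exact ck|split; [|exact Tj]].
  destruct (zero_initial C Y) as [eY _].
  apply (homotopic_we (TW eY)), we_comp; [exact ww | exact (morphism_we mL ws)].
Qed.

Lemma lifts_retractions_of_hff_comp {B C D : CylinderCategory} {P : Functor C D}
  {G : Functor B C} :
  homotopy_fully_faithful (Fcomp P G) ->
  forall {p q : B} {k : hom p q}, cof k -> lifts_retractions P (fmap G k).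
Proof.
  intros hffPG p q k ck rho Er.
  destruct (hffPG p q p k (idm p) rho ck) as [v' [V1 V2]].
  { cbn. rewrite Er, !fmap_id. auto. }
  exists (fmap G v'). split.
  - rewrite <- fmap_comp, V1, fmap_id. auto.
  - exact (homotopic_of_rel_homotopic V2).
Qed.

Section LiftingAlongAcyclic.
Context {A C D : CylinderCategory} {L : Functor A C} {P : Functor C D}.
Hypothesis HP : is_morphism P.
Hypothesis HL : is_morphism L.
Hypothesis acycL : acyclic L.
Hypothesis lifts_image : forall (a b : A) (k : hom a b), cof k -> lifts_retractions P (fmap L k).

(** Cofibrations out of an object [L a] are weakly equivalent to images of cofibrations. *)
Lemma lifts_retractions_from_image {a : A} {Y : C} {j : hom (L a) Y} :
  cof j -> lifts_retractions P j.
Proof.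
  intros cj.
  destruct (acyclic_rel_surjective HL acycL a Y j cj) as [q [k [t [ck [wt Et]]]]].
  apply (proj2 (lifts_retractions_we_invariant HP j t cj (morphism_cof HL ck) wt Et)).
  exact (lifts_image _ _ k ck).
Qed.

(** Every cofibration [j : X -> Y] of [C] is reached from such cofibrations: replace [X]
    by the mapping cylinder [M] of a weak equivalence [w : X -> L a], in which [X] is a
    retract and [L a] a trivial cofibration, and push [j] out accordingly. *)
Lemma lifts_retractions_all (X Y : C) (j : hom X Y) : cof j -> lifts_retractions P j.
Proof.
  intros cj.
  destruct (proj1 acycL X) as [a [w ww]].
  destruct (mapping_cylinder w) as [M [m [rw [s [cm [wrw [cs [ws [Rm _]]]]]]]]].
  assert (wm : we m) by (apply (we_cancel_left rw m); [rewrite Rm|]; auto).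
  destruct (tcof_retraction C _ _ m cm wm) as [sg Hsg].
  destruct (pushout_exists C _ _ _ j m cj) as [YM [m' [jM HYM]]].
  assert (cjM := pushout_cof C HYM cj).
  apply (lifts_retractions_pushout_retract HP sg cj Hsg HYM).
  (* [jM : M -> YM] is weakly equivalent to the pushout [jP] of [jM ∘ s] along [s] *)
  assert (cj0 : cof (jM ∘ s)) by (apply cof_comp; auto).
  destruct (pushout_exists C _ _ _ (jM ∘ s) s cj0) as [Pp [u [jP HPp]]].
  assert (RPP := lifts_retractions_pushout HP cj0 cs ws HPp (lifts_retractions_from_image cj0)).
  destruct (pushout_factor HPp (idm YM) jM) as [phi [P1 P2]]; [rewrite comp_id_l; auto|].
  assert (wu : we u) by exact (pushout_we C (pushout_swap HPp) cs ws).
  assert (wphi : we phi) by exact (we_retraction phi u P1 wu).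
  exact (proj1 (lifts_retractions_we_invariant HP jP phi (pushout_cof C HPp cj0) cjM wphi P2) RPP).
Qed.
End LiftingAlongAcyclic.

Section AcyclicClosure.
Context {B C D : CylinderCategory} {F : Functor C D} {G : Functor B C}.

Lemma hs_of_hs_comp : homotopy_surjective (Fcomp F G) -> homotopy_surjective F.
Proof. intros hsFG d. destruct (hsFG d) as [b [w ww]]. exists (G b), w. exact ww. Qed.

Lemma hs_comp :
  is_morphism F -> homotopy_surjective F -> homotopy_surjective G ->
  homotopy_surjective (Fcomp F G).
Proof.
  intros mF hsF hsG d. destruct (hsF d) as [c [w1 ww1]]. destruct (hsG c) as [b [w2 ww2]].
  exists b, (fmap F w2 ∘ w1). exact (we_comp D _ _ _ _ _ ww1 (morphism_we mF ww2)).
Qed.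

(** Lift first along [F], then along [G]; the two homotopies compose. *)
Lemma hff_comp :
  is_morphism F -> is_morphism G ->
  homotopy_fully_faithful F -> homotopy_fully_faithful G ->
  homotopy_fully_faithful (Fcomp F G).
Proof.
  intros mF mG hffF hffG a b X i x v ci Ev. cbn in *.
  assert (cGi := morphism_cof mG ci). assert (cFGi := morphism_cof mF cGi).
  destruct (hffF _ _ _ (fmap G i) (fmap G x) v cGi Ev) as [v1 [V1 V2]].
  destruct (hffG _ _ _ i x v1 ci V1) as [v' [V3 V4]].
  exists v'. split; [exact V3|]. apply (rel_homotopic_of_homotopic cFGi).
  apply (homotopic_trans (g := fmap F v1) cFGi); [|exact (homotopic_of_rel_homotopic V2)].
  exact (homotopic_fmap F (fun _ _ _ => morphism_we mF) (homotopic_of_rel_homotopic V4)).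
Qed.

(** Cancellation: if [F] and [F ∘ G] are homotopy fully faithful, so is [G]; the lift
    provided by [F ∘ G] works for [G] because [F] reflects homotopies. *)
Lemma hff_cancel_left :
  is_morphism F -> is_morphism G -> homotopy_fully_faithful F ->
  homotopy_fully_faithful (Fcomp F G) -> homotopy_fully_faithful G.
Proof.
  intros mF mG hffF hffFG a b X i x v ci Ev.
  destruct (hffFG a b X i x (fmap F v) ci) as [v' [V1 V2]].
  { cbn. rewrite <- fmap_comp, Ev. auto. }
  exists v'. split; [exact V1|].
  apply (rel_homotopic_of_homotopic (morphism_cof mG ci)).
  apply (reflect_homotopic mF hffF _ _ _ (morphism_cof mG ci)).
  - rewrite <- fmap_comp, V1. auto.
  - exact (homotopic_of_rel_homotopic V2).
Qed.

(** If [G] is homotopy fully faithful and [G ∘ H] homotopy surjective, then [H] is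
    homotopy surjective: a weak equivalence [G b -> G (H a)] lifts to [b -> H a]. *)
Lemma hs_cancel_left {A : CylinderCategory} {H : Functor A B} :
  is_morphism G -> homotopy_fully_faithful G ->
  homotopy_surjective (Fcomp G H) -> homotopy_surjective H.
Proof.
  intros mG hffG hsGH b. destruct (hsGH (G b)) as [a [w ww]].
  destruct (zero_initial B b) as [eb _]. destruct (zero_initial B (H a)) as [ea _].
  destruct (hffG _ _ _ eb ea w (zero_cof B _ eb)) as [w' [_ W']].
  { apply (initial_unique (morphism_initial mG)). }
  exists a, w'. apply (reflect_we mG hffG w').
  exact (homotopic_we (homotopic_sym (homotopic_of_rel_homotopic W')) ww).
Qed.

Lemma acyclic_comp :
  is_morphism F -> is_morphism G -> acyclic F -> acyclic G -> acyclic (Fcomp F G).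
Proof.
  intros mF mG [hsF hffF] [hsG hffG].
  split; [exact (hs_comp mF hsF hsG) | exact (hff_comp mF mG hffF hffG)].
Qed.
End AcyclicClosure.

(** The only non-formal step is that [F] is homotopy fully
    faithful: [F ∘ G] makes [F] lift retractions along images of cofibrations under [G],
    hence (as [G ∘ H] is acyclic) along all cofibrations. *)
Theorem mainTheorem5 (A B C D : CylinderCategory)
  (H : Functor A B) (G : Functor B C) (F : Functor C D) :
  is_morphism H -> is_morphism G -> is_morphism F ->
  acyclic (Fcomp F G) -> acyclic (Fcomp G H) ->
  acyclic F /\ acyclic G /\ acyclic H /\ acyclic (Fcomp F (Fcomp G H)).
Proof.
  intros mH mG mF [hsFG hffFG] acGH.
  pose proof acGH as [hsGH hffGH].
  assert (hffF : homotopy_fully_faithful F).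
  { apply (hff_of_lifts_retractions mF).
    apply (lifts_retractions_all mF (morphism_comp mG mH) acGH).
    intros a b k ck. exact (lifts_retractions_of_hff_comp hffFG (morphism_cof mH ck)). }
  assert (hffG : homotopy_fully_faithful G) by exact (hff_cancel_left mF mG hffF hffFG).
  assert (hffH : homotopy_fully_faithful H) by exact (hff_cancel_left mG mH hffG hffGH).
  assert (acF : acyclic F) by exact (conj (hs_of_hs_comp hsFG) hffF).
  split; [exact acF|].
  split; [exact (conj (hs_of_hs_comp hsGH) hffG)|].
  split; [exact (conj (hs_cancel_left mG hffG hsGH) hffH)|].
  exact (acyclic_comp mF (morphism_comp mG mH) acF acGH).
Qed.
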